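(* Let $n$ be odd and let $0\le k,m\le n/2$. Let $N_n(k,m)$ be the number of reduced Latin squares of order $n$ of parity type $(k,m)$. Then the number of even reduced Latin squares of order $n$ of parity type $(k,m)$ equals $$\frac{km+(n-k)(n-m)}{n^2}N_n(k,m)\quad\text{if } k\equiv m \pmod 2,$$ and $$\frac{k(n-m)+m(n-k)}{n^2}N_n(k,m)\quad\text{if } k\not\equiv m \pmod 2.$$
   Context: A Latin square of order $n$ is an $n\times n$ array with entries in $[n]$, each symbol once in each row and column. Rows and columns are viewed as permutations: if symbol $i$ appears in the $j$th place of a row (column) $\sigma$, then $\sigma(i)=j$. $L$ is reduced if its first row and first column are the identity permutation. $\mathrm{par}(L)$ is the product of the signs of all rows and columns of $L$; $L$ is even if $\mathrm{par}(L)=1$. The parity type of $L$ is $(k,m)$, $0\le k,m\le n/2$, if $k$ of its rows have one sign and the other $n-k$ rows the opposite sign, and $m$ of its columns have one sign and the other $n-m$ columns the opposite sign. *)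

From mathcomp Require Import all_boot all_order all_algebra all_fingroup.
Set Implicit Arguments. Unset Strict Implicit. Unset Printing Implicit Defensive.

(* Squares of order n: rows, columns and symbols are all indexed by 'I_n
   (symbols 0..n-1 instead of 1..n). L i j is the symbol in row i, column j. *)
Definition square (n : nat) := 'M['I_n]_n.

Definition is_latin n (L : square n) : bool :=
  [forall i, injectiveb (fun j => L i j)] &&
  [forall j, injectiveb (fun i => L i j)].

Definition is_reduced n (L : square n) : bool :=
  [forall i, [forall j,
     ((nat_of_ord i == 0%N) ==> (L i j == j)) &&
     ((nat_of_ord j == 0%N) ==> (L i j == i))]].

(* row i viewed as the permutation s with s(symbol) = place; the row is odd
   iff this permutation is odd *)
Definition row_odd n (L : square n) (i : 'I_n) : bool :=
  [exists s : 'S_n, [forall x, L i (s x) == x] && odd_perm s].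
Definition col_odd n (L : square n) (j : 'I_n) : bool :=
  [exists s : 'S_n, [forall x, L (s x) j == x] && odd_perm s].

Definition n_odd_rows n (L : square n) : nat := #|[set i | row_odd L i]|.
Definition n_odd_cols n (L : square n) : nat := #|[set j | col_odd L j]|.

Definition is_even n (L : square n) : bool :=
  ~~ odd (n_odd_rows L + n_odd_cols L).

(* parity type (k,m): k rows of one sign, n-k of the other; likewise columns *)
Definition has_parity_type n (L : square n) (k m : nat) : bool :=
  ((n_odd_rows L == k) || (n_odd_rows L == n - k)) &&
  ((n_odd_cols L == m) || (n_odd_cols L == n - m)).

Definition N_count n (k m : nat) : nat :=
  #|[set L : square n | [&& is_latin L, is_reduced L & has_parity_type L k m]]|.

Definition E_count n (k m : nat) : nat :=
  #|[set L : square n | [&& is_latin L, is_reduced L, has_parity_type L k m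
                          & is_even L]]|.

(* Double counting.  For a Latin square M and a row a, column b, there is a
   reduced isotope [reduce M a b] whose first row and column come from row a and
   column b; the triples (M, a, b) are in bijection with the reduced Latin squares
   together with an isotopy (two permutations and a column), so they count the
   reduced squares with multiplicity n!.n!.n.  Reduction keeps the parity type and
   complements the number of odd rows exactly when row a of M is odd (likewise for
   columns).  For n odd, complementing flips parity, so [reduce M a b] is even iff
   (row a odd) xor (column b odd) equals the parity of the number of odd rows plus
   odd columns of M; counting such (a, b) among the n^2 pairs gives the factor
   km + (n-k)(n-m), resp. k(n-m) + m(n-k). *)

From mathcomp Require Import all_boot all_order all_algebra all_fingroup.
From mathcomp Require Import zify.

Set Implicit Arguments.
Unset Strict Implicit.
Unset Printing Implicit Defensive.

Section InjPerm.
Variable T : finType.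

Definition inj_perm (f : T -> T) : {perm T} :=
  if injectiveP f is ReflectT f_inj then perm f_inj else 1%g.

Lemma inj_permE f : injective f -> inj_perm f =1 f.
Proof. by rewrite /inj_perm; case: injectiveP => // f_inj _ x; rewrite permE. Qed.

Lemma inj_perm_eq f (s : {perm T}) : f =1 s -> inj_perm f = s.
Proof.
move=> fE; have f_inj : injective f by move=> x y; rewrite !fE => /perm_inj.
by apply/permP => x; rewrite inj_permE.
Qed.

Lemma odd_right_inverseE f : injective f ->
  [exists s : {perm T}, [forall x, f (s x) == x] && odd_perm s] =
  odd_perm (inj_perm f).
Proof.
move=> f_inj; apply/existsP/idP => [[s /andP[/forallP fsK odd_s]] | odd_f].
  suff -> : inj_perm f = s^-1%g by rewrite odd_permV.
  by apply: inj_perm_eq => x; rewrite -{1}(permKV s x) (eqP (fsK _)).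
exists (inj_perm f)^-1%g; rewrite odd_permV odd_f andbT.
by apply/forallP => x; rewrite -inj_permE // permKV.
Qed.

Lemma card_perm_xor (s : {perm T}) (p : pred T) c :
  #|[set x | p (s x) (+) c]| =
  if c then #|T| - #|[set x | p x]| else #|[set x | p x]|.
Proof.
have -> : #|[set x | p (s x) (+) c]| = #|[set x | p x (+) c]|.
  rewrite -(card_imset [set x | p (s x) (+) c] (@perm_inj _ s)).
  apply: eq_card => x.
  apply/imsetP/idP => [[y + ->] | ]; first by rewrite !inE.
  by rewrite inE => px; exists (s^-1 x)%g; rewrite ?inE permKV.
case: c; last by apply: eq_card => x; rewrite !inE addbF.
rewrite -(cardsC [set x | p x]) addKn; apply: eq_card => x.
by rewrite !inE addbT.
Qed.

Lemma sum_pred_bool (p : pred T) (F : bool -> nat) :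
  \sum_x F (p x) =
  F true * #|[set x | p x]| + F false * (#|T| - #|[set x | p x]|).
Proof.
rewrite (bigID p) /= (eq_bigr (fun=> F true)) => [|x ->] //.
rewrite [X in _ + X](eq_bigr (fun=> F false)) => [|x /negbTE ->] //.
rewrite !sum_nat_cond_const -(cardsC [set x | p x]) addKn.
have -> : [set x | ~~ p x] = ~: [set x | p x] by apply/setP => x; rewrite !inE.
by rewrite mulnC [_ * F false]mulnC.
Qed.

Lemma sum_pairs_xor (p q : pred T) c :
  \sum_x \sum_y ((p x (+) q y == c) : nat) =
  let K := #|[set x | p x]| in let L := #|[set x | q x]| in
  if c then K * (#|T| - L) + (#|T| - K) * L
  else K * L + (#|T| - K) * (#|T| - L).
Proof.
set K := #|[set x | p x]|; set L := #|[set x | q x]|.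
pose G a := ((a (+) true == c) : nat) * L + ((a (+) false == c) : nat) * (#|T| - L).
have inner x : \sum_y ((p x (+) q y == c) : nat) = G (p x).
  exact: (sum_pred_bool q (fun b => (p x (+) b == c) : nat)).
rewrite (eq_bigr _ (fun x _ => inner x)) sum_pred_bool {inner}/G.
by case: c => /=; lia.
Qed.

Lemma card_in_bij (T' : finType) (A : {set T}) (B : {set T'}) f g :
  {in A, cancel f g} -> {in B, cancel g f} ->
  {in A, forall x, f x \in B} -> {in B, forall y, g y \in A} -> #|A| = #|B|.
Proof.
move=> fK gK fAB gBA; rewrite -(card_in_imset (can_in_inj fK)).
apply: eq_card => y; apply/imsetP/idP => [[x /fAB ? ->] // | By].
by exists (g y); rewrite ?gBA ?gK.
Qed.

End InjPerm.

Lemma eq_count_or_complement N K k : K <= N -> k <= N ->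
  (N - K == k) || (N - K == N - k) = (K == k) || (K == N - k).
Proof. by move=> leKN lekN; apply/idP/idP => /orP[] /eqP eqK; apply/orP; lia. Qed.

Definition even_share N k m :=
  if odd k == odd m then k * m + (N - k) * (N - m) else k * (N - m) + m * (N - k).

Lemma even_shareE N k m K L : odd N -> k <= N -> m <= N ->
  (K == k) || (K == N - k) -> (L == m) || (L == N - m) ->
  (if odd (K + L) then K * (N - L) + (N - K) * L else K * L + (N - K) * (N - L)) =
  even_share N k m.
Proof.
move=> oddN lekN lemN /orP[] /eqP-> /orP[] /eqP->;
  rewrite /even_share !oddD ?oddB ?oddN ?subKn //;
  by case: (odd k); case: (odd m) => /=; lia.
Qed.

Section LatinSquares.
Variable n : nat.
Local Notation sq := (square n.+1).
Local Notation perm := {perm 'I_n.+1}.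
Implicit Types (L M R : sq) (r p t : perm).

Lemma latin_row L i : is_latin L -> injective (L i).
Proof. by case/andP => /forallP/(_ i)/injectiveP. Qed.

Lemma latin_tr L : is_latin (trmx L) = is_latin L.
Proof.
by rewrite /is_latin andbC; congr (_ && _); apply: eq_forallb => i;
   apply: eq_injectiveb => j; rewrite mxE.
Qed.

Lemma latin_col L j : is_latin L -> injective (L^~ j).
Proof. by rewrite -latin_tr => /(@latin_row _ j) inj x y e; apply: inj; rewrite !mxE. Qed.

Lemma row_oddE L i : is_latin L -> row_odd L i = odd_perm (inj_perm (L i)).
Proof. by move=> /(@latin_row _ i)/odd_right_inverseE. Qed.

Lemma col_odd_tr L j : col_odd L j = row_odd (trmx L) j.
Proof.
by apply: eq_existsb => s; congr (_ && _); apply: eq_forallb => x; rewrite mxE.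
Qed.

Lemma n_odd_cols_tr L : n_odd_cols L = n_odd_rows (trmx L).
Proof. by apply: eq_card => j; rewrite !inE col_odd_tr. Qed.

Definition isotope M r p t : sq := (\matrix_(i, j) p (M (r i) (t j)))%R.

Lemma isotope_latin M r p t : is_latin M -> is_latin (isotope M r p t).
Proof.
move=> latM; apply/andP; split; apply/forallP => i; apply/injectiveP => x y;
  rewrite !mxE => /perm_inj.
- by move/(latin_row latM)/perm_inj.
- by move/(latin_col latM)/perm_inj.
Qed.

Lemma isotope_tr M r p t : trmx (isotope M r p t) = isotope (trmx M) t p r.
Proof. by apply/matrixP => i j; rewrite !mxE. Qed.

Lemma row_odd_isotope M r p t i : is_latin M ->
  row_odd (isotope M r p t) i = odd_perm t (+) row_odd M (r i) (+) odd_perm p.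
Proof.
move=> latM; rewrite !row_oddE ?isotope_latin //.
rewrite (@inj_perm_eq _ _ (t * inj_perm (M (r i)) * p)%g) ?odd_permM // => j.
by rewrite !permM mxE inj_permE //; apply: latin_row.
Qed.

Lemma reducedP R :
  reflect ((forall j, R ord0 j = j) /\ (forall i, R i ord0 = i)) (is_reduced R).
Proof.
apply: (iffP forallP) => [red | [row0 col0] i].
  split=> [j | i].
    by have /forallP/(_ j)/andP[/implyP/(_ isT)/eqP] := red ord0.
  by have /forallP/(_ ord0)/andP[_ /implyP/(_ isT)/eqP] := red i.
apply/forallP => j; apply/andP; split; apply/implyP => /eqP/(@ord_inj _ _ ord0) ->.
  exact/eqP/row0.
exact/eqP/col0.
Qed.

Lemma reduced_tr R : is_reduced (trmx R) = is_reduced R.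
Proof.
by apply/reducedP/reducedP => -[row0 col0]; split=> i;
   [move: (col0 i) | move: (row0 i) | move: (col0 i) | move: (row0 i)]; rewrite mxE.
Qed.

Lemma row_odd_reduced0 R : is_latin R -> is_reduced R -> row_odd R ord0 = false.
Proof.
move=> latR /reducedP[row0 _]; rewrite row_oddE //.
by rewrite (@inj_perm_eq _ _ 1%g) ?odd_perm1 // => j; rewrite perm1 row0.
Qed.

(* Row 0 of a reduced square is even, which cancels the parities of [t] and [p]. *)
Lemma row_odd_reduced_isotope M r p t i :
  is_latin M -> is_reduced (isotope M r p t) ->
  row_odd (isotope M r p t) i = row_odd M (r i) (+) row_odd M (r ord0).
Proof.
move=> latM red; have := row_odd_reduced0 (isotope_latin r p t latM) red.
rewrite !row_odd_isotope //.
by case: (odd_perm t); case: (odd_perm p); case: (row_odd M (r i));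
   case: (row_odd M (r ord0)).
Qed.

Lemma n_odd_rows_reduced_isotope M r p t :
  is_latin M -> is_reduced (isotope M r p t) ->
  n_odd_rows (isotope M r p t) =
  if row_odd M (r ord0) then n.+1 - n_odd_rows M else n_odd_rows M.
Proof.
move=> latM red.
rewrite -[X in X - _](card_ord n.+1) -(card_perm_xor r (row_odd M)).
by apply: eq_card => i; rewrite !inE row_odd_reduced_isotope.
Qed.

Lemma n_odd_cols_reduced_isotope M r p t :
  is_latin M -> is_reduced (isotope M r p t) ->
  n_odd_cols (isotope M r p t) =
  if col_odd M (t ord0) then n.+1 - n_odd_cols M else n_odd_cols M.
Proof.
rewrite -latin_tr -reduced_tr !n_odd_cols_tr !col_odd_tr isotope_tr.
exact: n_odd_rows_reduced_isotope.
Qed.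

Lemma n_odd_rows_le M : n_odd_rows M <= n.+1.
Proof. by rewrite -[X in _ <= X](card_ord n.+1) max_card. Qed.

Lemma n_odd_cols_le M : n_odd_cols M <= n.+1.
Proof. by rewrite n_odd_cols_tr n_odd_rows_le. Qed.

Lemma parity_type_reduced_isotope M r p t k m :
  k <= n.+1 -> m <= n.+1 -> is_latin M -> is_reduced (isotope M r p t) ->
  has_parity_type (isotope M r p t) k m = has_parity_type M k m.
Proof.
move=> lek lem latM red; rewrite /has_parity_type.
rewrite n_odd_rows_reduced_isotope ?n_odd_cols_reduced_isotope //.
by case: ifP; case: ifP; rewrite ?eq_count_or_complement ?n_odd_rows_le ?n_odd_cols_le.
Qed.

Lemma even_reduced_isotope M r p t :
  odd n.+1 -> is_latin M -> is_reduced (isotope M r p t) ->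
  is_even (isotope M r p t) =
  (row_odd M (r ord0) (+) col_odd M (t ord0) == odd (n_odd_rows M + n_odd_cols M)).
Proof.
move=> odd_n latM red; rewrite /is_even.
rewrite n_odd_rows_reduced_isotope ?n_odd_cols_reduced_isotope //.
have oddC K : K <= n.+1 -> odd (n.+1 - K) = ~~ odd K.
  by move=> leK; rewrite oddB // odd_n.
by case: ifP; case: ifP; rewrite !oddD ?oddC ?n_odd_rows_le ?n_odd_cols_le //;
   case: (odd (n_odd_rows M)); case: (odd (n_odd_cols M)).
Qed.

Lemma isotopeK M r p t : isotope (isotope M r p t) r^-1 p^-1 t^-1 = M.
Proof. by apply/matrixP => i j; rewrite !mxE !permKV permK. Qed.

Lemma isotopeVK M r p t : isotope (isotope M r^-1 p^-1 t^-1) r p t = M.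
Proof. by apply/matrixP => i j; rewrite !mxE !permK permKV. Qed.

(* The reduced isotope of [M] whose first row and column come from row [a] and
   column [b] of [M], columns [0] and [b] being swapped. *)
Definition reduce_sym_perm M a b : perm := ((inj_perm (M a))^-1 * tperm ord0 b)%g.
Definition reduce_row_perm M a b : perm :=
  (inj_perm (M^~ b) * reduce_sym_perm M a b)^-1%g.
Definition reduce M a b :=
  isotope M (reduce_row_perm M a b) (reduce_sym_perm M a b) (tperm ord0 b).

Lemma reduce_row_perm0 M a b : is_latin M -> reduce_row_perm M a b ord0 = a.
Proof.
move=> latM; apply: (canLR (permK _)).
rewrite permM /reduce_sym_perm permM inj_permE; last exact: latin_col.
by rewrite -[M a b](inj_permE (latin_row latM) b) permK tpermR.
Qed.

Lemma reduce_reduced M a b : is_latin M -> is_reduced (reduce M a b).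
Proof.
move=> latM; apply/reducedP; split=> [j | i]; rewrite mxE.
  rewrite reduce_row_perm0 // /reduce_sym_perm permM.
  by rewrite -(inj_permE (latin_row latM) (tperm _ _ j)) permK tpermK.
rewrite tpermL -(inj_permE (latin_col latM) (reduce_row_perm M a b i)).
by rewrite -!permM mulVg perm1.
Qed.

Section ReductionBijection.
Variable P : pred sq.

Definition reduced_isotopies :=
  [set x : sq * (perm * (perm * 'I_n.+1)) | [&& is_latin x.1, is_reduced x.1 & P x.1]].
Definition latin_reductions :=
  [set y : sq * ('I_n.+1 * 'I_n.+1) | is_latin y.1 && P (reduce y.1 y.2.1 y.2.2)].

Definition unreduce (x : sq * (perm * (perm * 'I_n.+1))) :=
  let: (R, (r, (p, b))) := x in (isotope R r^-1 p^-1 (tperm ord0 b), (r ord0, b)).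
Definition reduce_data (y : sq * ('I_n.+1 * 'I_n.+1)) :=
  let: (M, (a, b)) := y in
  (reduce M a b, (reduce_row_perm M a b, (reduce_sym_perm M a b, b))).

Lemma reduce_dataK y : is_latin y.1 -> unreduce (reduce_data y) = y.
Proof.
case: y => M [a b] /= latM; rewrite reduce_row_perm0 //.
by rewrite -[tperm _ _ in LHS]tpermV isotopeK.
Qed.

Lemma unreduceK x : is_latin x.1 -> is_reduced x.1 -> reduce_data (unreduce x) = x.
Proof.
case: x => R [r [p b]] /= latR /reducedP[row0 col0].
set M := isotope R r^-1 p^-1 (tperm ord0 b).
have sym_pE : reduce_sym_perm M (r ord0) b = p.
  rewrite /reduce_sym_perm (@inj_perm_eq _ _ (tperm ord0 b * p^-1)%g) => [|j].
    by rewrite invMg invgK tpermV -mulgA tperm2 mulg1.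
  by rewrite mxE permK row0 permM.
have row_pE : reduce_row_perm M (r ord0) b = r.
  rewrite /reduce_row_perm sym_pE (@inj_perm_eq _ _ (r^-1 * p^-1)%g) => [|i].
    by rewrite mulgKV invgK.
  by rewrite mxE tpermR col0 permM.
by rewrite /reduce /= sym_pE row_pE /M -{1}tpermV isotopeVK.
Qed.

Lemma card_reduced_isotopies : #|reduced_isotopies| = #|latin_reductions|.
Proof.
apply: (card_in_bij (f := unreduce) (g := reduce_data)).
- by move=> x; rewrite inE => /and3P[latR redR _]; apply: unreduceK.
- by move=> y; rewrite inE => /andP[latM _]; apply: reduce_dataK.
- move=> [R [r [p b]]]; rewrite !inE /= => /and3P[latR redR PR].
  have := unreduceK (x := (R, (r, (p, b)))) latR redR; rewrite /= => -[-> _ _].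
  by rewrite isotope_latin.
- move=> [M [a b]]; rewrite !inE /= => /andP[latM PR].
  by rewrite reduce_reduced // isotope_latin.
Qed.

Lemma reduced_double_count :
  #|[set R : sq | [&& is_latin R, is_reduced R & P R]]| * (n.+1`! * (n.+1`! * n.+1)) =
  \sum_M \sum_a \sum_b (is_latin M && P (reduce M a b) : nat).
Proof.
transitivity #|reduced_isotopies|.
  have -> : reduced_isotopies = setX [set R : sq | [&& is_latin R, is_reduced R & P R]]
                                      [set: perm * (perm * 'I_n.+1)].
    by apply/setP => -[R x]; rewrite !inE andbT.
  by rewrite cardsX cardsT !card_prod card_Sn card_ord.
rewrite card_reduced_isotopies.
have := sum_pred_bool
  (fun y : sq * ('I_n.+1 * 'I_n.+1) => is_latin y.1 && P (reduce y.1 y.2.1 y.2.2)) nat_of_bool.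
rewrite mul1n mul0n addn0 => <-.
rewrite -(pair_bigA _ (fun M ab => is_latin M && P (reduce M ab.1 ab.2) : nat)) /=.
apply: eq_bigr => M _.
by rewrite -(pair_bigA _ (fun a b => is_latin M && P (reduce M a b) : nat)).
Qed.

End ReductionBijection.

Lemma sum_reductions_type M k m : k <= n.+1 -> m <= n.+1 -> is_latin M ->
  \sum_a \sum_b (has_parity_type (reduce M a b) k m : nat) =
  has_parity_type M k m * (n.+1 * n.+1).
Proof.
move=> lek lem latM.
under eq_bigr => a _ do under eq_bigr => b _ do
  rewrite parity_type_reduced_isotope ?reduce_reduced //.
by rewrite !sum_nat_const !card_ord mulnA mulnC.
Qed.

Lemma sum_reductions_even M k m :
  odd n.+1 -> k <= n.+1 -> m <= n.+1 -> is_latin M ->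
  \sum_a \sum_b (has_parity_type (reduce M a b) k m && is_even (reduce M a b) : nat) =
  has_parity_type M k m * even_share n.+1 k m.
Proof.
move=> odd_n lek lem latM.
under eq_bigr => a _ do under eq_bigr => b _ do
  rewrite parity_type_reduced_isotope ?even_reduced_isotope ?reduce_reduced //
          reduce_row_perm0 // tpermL.
case typeM: (has_parity_type M k m); last by rewrite big1 // => a _; rewrite big1.
case/andP: typeM => typeR typeC.
by rewrite /= (sum_pairs_xor (row_odd M) (col_odd M)) /= !card_ord
           (even_shareE odd_n lek lem typeR typeC) mul1n.
Qed.

End LatinSquares.

Lemma count_even_reduced n k m : odd n.+1 -> k <= n.+1 -> m <= n.+1 ->
  E_count n.+1 k m * n.+1 ^ 2 = even_share n.+1 k m * N_count n.+1 k m.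
Proof.
move=> odd_n lek lem.
set n_latin_type := \sum_(M : square n.+1) (is_latin M && has_parity_type M k m : nat).
set c := n.+1`! * (n.+1`! * n.+1).
have sum_latin_reductions (P : pred (square n.+1)) (F : square n.+1 -> nat) :
    (forall M, is_latin M -> \sum_a \sum_b (P (reduce M a b) : nat) = F M) ->
    \sum_M \sum_a \sum_b (is_latin M && P (reduce M a b) : nat) =
    \sum_M (is_latin M : nat) * F M.
  move=> sumF; apply: eq_bigr => M _.
  case latM: (is_latin M); last by rewrite big1 // => a _; rewrite big1.
  by rewrite mul1n -sumF.
have countN : N_count n.+1 k m * c = n_latin_type * n.+1 ^ 2.
  rewrite (reduced_double_count (fun R => has_parity_type R k m)).
  rewrite (sum_latin_reductions (fun R => has_parity_type R k m) _
    (fun M => sum_reductions_type lek lem)) big_distrl.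
  by apply: eq_bigr => M _; rewrite mulnA mulnb mulnn.
have countE : E_count n.+1 k m * c = n_latin_type * even_share n.+1 k m.
  rewrite (reduced_double_count (fun R => has_parity_type R k m && is_even R)).
  rewrite (sum_latin_reductions (fun R => has_parity_type R k m && is_even R) _
    (fun M => sum_reductions_even odd_n lek lem)) big_distrl.
  by apply: eq_bigr => M _; rewrite mulnA mulnb.
have c_gt0 : 0 < c by rewrite !muln_gt0 fact_gt0.
apply/eqP; rewrite -(eqn_pmul2r c_gt0); apply/eqP.
by rewrite mulnAC countE -[RHS]mulnA countN mulnCA mulnA.
Qed.

Import GRing.Theory Num.Theory.
Local Open Scope ring_scope.

Theorem corollary3p2 (n k m : nat) (hn : odd n)
  (hk : (2 * k <= n)%N) (hm : (2 * m <= n)%N) :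
  (E_count n k m)%:R =
    (if odd k == odd m
     then ((k * m + (n - k) * (n - m))%:R / (n ^ 2)%:R) * (N_count n k m)%:R
     else ((k * (n - m) + m * (n - k))%:R / (n ^ 2)%:R) * (N_count n k m)%:R
    :> rat).
Proof.
case: n hn hk hm => [// | n] hn hk hm.
have lek : (k <= n.+1)%N by lia.
have lem : (m <= n.+1)%N by lia.
have n2_neq0 : (n.+1 ^ 2)%:R != 0 :> rat by rewrite pnatr_eq0 expn_eq0.
case: ifP => parity_km; apply: (mulIf n2_neq0);
  by rewrite mulrAC divfK // -!natrM count_even_reduced // /even_share parity_km.
Qed.
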